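(* Let $0<\delta<1$ and let $G$ be a $d$-regular graph on $n$ vertices whose second largest adjacency eigenvalue satisfies $\lambda_2\le\delta d$ (in particular, this holds for any $(n,d,\lambda)$-graph with $\lambda<\delta d$). Then, with activation threshold $r=2$, every set of vertices of size larger than $\frac{n}{(1-\delta)d}$ is contagious.
   Context: Bootstrap percolation with threshold $r\ge 2$ on a graph $G=(V,E)$: given a set $A_0\subseteq V$ of seeds, define for $i\ge1$ $A_i=A_{i-1}\cup\{v:|N(v)\cap A_{i-1}|\ge r\}$, where $N(v)$ is the set of neighbors of $v$, and $\langle A_0\rangle=\bigcup_i A_i$. The set $A_0$ is contagious if $\langle A_0\rangle=V$. The adjacency eigenvalues are ordered $d=\lambda_1\ge\lambda_2\ge\dots\ge\lambda_n$; an $(n,d,\lambda)$-graph is a $d$-regular $n$-vertex graph with $\max\{|\lambda_2|,|\lambda_n|\}\le\lambda$. *)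

From HB Require Import structures.
From mathcomp Require Import all_boot all_order all_algebra all_field.
Set Implicit Arguments. Unset Strict Implicit. Unset Printing Implicit Defensive.
Import Order.TTheory GRing.Theory Num.Theory.

Definition simple_graph n (e : rel 'I_n) : Prop :=
  symmetric e /\ irreflexive e.

Definition nbhd n (e : rel 'I_n) (v : 'I_n) : {set 'I_n} := [set w | e v w].

Definition regular n (e : rel 'I_n) (d : nat) : Prop :=
  forall v : 'I_n, #|nbhd e v| = d.

Local Open Scope ring_scope.
Definition adjmx n (e : rel 'I_n) : 'M[algC]_n :=
  \matrix_(i, j) ((e i j : nat)%:R).

(* The eigenvalues of a square complex matrix, listed with multiplicity
   (the roots of its characteristic polynomial). *)
Definition eigenvalues n (A : 'M[algC]_n) : seq algC :=
  sval (closed_field_poly_normal (char_poly A)).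

Definition sorted_eigenvalues n (A : 'M[algC]_n) : seq algC :=
  sort (fun x y : algC => y <= x) (eigenvalues A).

(* lambda_k (1-indexed) of the adjacency matrix. *)
Definition adj_eigen n (e : rel 'I_n) (k : nat) : algC :=
  nth 0 (sorted_eigenvalues (adjmx e)) k.-1.

Local Close Scope ring_scope.

Definition bp_step n (e : rel 'I_n) (r : nat) (A : {set 'I_n}) : {set 'I_n} :=
  A :|: [set v | r <= #|nbhd e v :&: A|].

Definition bp_stage n (e : rel 'I_n) (r : nat) (A0 : {set 'I_n}) (i : nat) :=
  iter i (bp_step e r) A0.

Definition bp_closure n (e : rel 'I_n) (r : nat) (A0 : {set 'I_n}) : 'I_n -> Prop :=
  fun v => exists i, v \in bp_stage e r A0 i.

Definition contagious n (e : rel 'I_n) (r : nat) (A0 : {set 'I_n}) : Prop :=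
  forall v : 'I_n, bp_closure e r A0 v.

From HB Require Import structures.
From mathcomp Require Import all_boot all_order all_algebra all_field.
From mathcomp Require Import ring.
Import Order.TTheory GRing.Theory Num.Theory.
Local Open Scope ring_scope.
Set Implicit Arguments. Unset Strict Implicit.

(* Run the bootstrap process until it stabilises at a set B
   containing the seeds A.  As B is a fixpoint of the threshold-r step, every
   vertex outside B has at most c = r - 1 neighbours in B, so at most
   c |V \ B| edges leave B.  Suppose B <> V.  Let w be the vector equal to a on
   B and to b off B, with (a, b) <> (0, 0) chosen so that w is orthogonal to
   the eigenvector of the top eigenvalue; then w Adj w* <= lambda_2 |w|^2.  As
   w Adj w* = d |w|^2 - cut(B) |a - b|^2, a weighted Cauchy-Schwarz inequality
   gives (d - lambda_2) |B| <= c n.  For r = 2 and lambda_2 <= delta d this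
   reads (1 - delta) d |A| <= n, contradicting the size assumption on A. *)

Lemma char_poly_similar (R : comNzRingType) n (Q M S : 'M[R]_n) :
  S *m Q = 1%:M -> char_poly (Q *m M *m S) = char_poly M.
Proof.
move=> SQ; rewrite /char_poly /char_poly_mx.
have -> : 'X%:M - map_mx polyC (Q *m M *m S) =
   map_mx polyC Q *m ('X%:M - map_mx polyC M) *m map_mx polyC S.
  rewrite mulmxBr mulmxBl !map_mxM; congr (_ - _).
  by rewrite mul_mx_scalar -scalemxAl -map_mxM (mulmx1C SQ) map_mx1 scalemx1.
by rewrite !det_mulmx mulrC mulrA -det_mulmx -map_mxM SQ map_mx1 det1 mul1r.
Qed.

Lemma count_gt_second (L : seq algC) : all (mem Num.real) L ->
  (count (fun x => nth 0 (sort (fun x y : algC => y <= x) L) 1 < x)%R L <= 1)%N.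
Proof.
set ge := (fun x y : algC => y <= x) => realL.
have ge_tr : transitive ge by move=> x y z; rewrite /ge => h1 h2; apply: le_trans h2 h1.
have ge_tot : {in Num.real &, total ge}.
  by move=> x y xR yR; rewrite /ge orbC; apply: real_leVge.
have sort_perm : perm_eq (sort ge L) L by rewrite perm_sort.
rewrite -(permP sort_perm).
case: (sort ge L) (sort_sorted_in ge_tot realL) => [|m1 [|m2 rest]] //=.
  by case: (_ < m1).
move=> /andP[_ sorted_rest]; rewrite ltxx add0n.
have /eqP -> : count (fun x => m2 < x)%R rest == 0%N.
  rewrite -leqn0 leqNgt -has_count; apply/hasPn => x xrest.
  by rewrite le_gtF //; apply: (allP (order_path_min ge_tr sorted_rest)).
by case: (_ < m1).
Qed.

Section SecondEigenvalue.
Local Open Scope sesquilinear_scope.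
Variable n : nat.

Definition second_eigenvalue (M : 'M[algC]_n) : algC :=
  nth 0 (sorted_eigenvalues M) 1.

Lemma eigenvalues_unitary_diag (M P : 'M[algC]_n) (s : 'rV[algC]_n) :
  M = P^t* *m diag_mx s *m P -> P *m P^t* = 1%:M ->
  perm_eq (eigenvalues M) [seq s 0 k | k <- enum 'I_n].
Proof.
move=> -> PP; rewrite /eigenvalues; case: closed_field_poly_normal => r /= Hr.
rewrite (monicP (char_poly_monic _)) scale1r in Hr.
rewrite char_poly_similar // char_poly_trig ?diag_mx_is_trig // in Hr.
apply: prod_XsubC_eq; rewrite -Hr big_map big_enum /=.
by apply: eq_bigr => i _; rewrite mxE eqxx mulr1n.
Qed.

Lemma all_but_one_le_second (M : 'M[algC]_n) (x : 'I_n -> algC) :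
  (0 < n)%N -> (forall k, x k \is Num.real) ->
  perm_eq (eigenvalues M) [seq x k | k <- enum 'I_n] ->
  exists i1, forall k, k != i1 -> x k <= second_eigenvalue M.
Proof.
move=> n_gt0 xR pL; set mu := second_eigenvalue M.
have realL : all (mem Num.real) (eigenvalues M).
  by apply/allP => y; rewrite (perm_mem pL) => /mapP[k _ ->]; apply: xR.
have muR : mu \is Num.real.
  rewrite /mu /second_eigenvalue /sorted_eigenvalues.
  have [lt1 | ge1] := ltnP 1 (size (sort (fun x y : algC => y <= x) (eigenvalues M))).
    by apply: (allP realL); rewrite -(mem_sort (fun x y : algC => y <= x)) mem_nth.
  by rewrite nth_default.
have cnt := count_gt_second realL.
rewrite (permP pL) count_map -size_filter in cnt.
have le_mu k : ~~ (mu < x k) -> x k <= mu by rewrite real_leNgt.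
case: (pickP (fun k => mu < x k)) => [i1 Hi1 | none]; last first.
  by exists (Ordinal n_gt0) => k _; apply: le_mu; rewrite none.
exists i1 => k kni; apply: le_mu; apply/negP => Hk.
suff : (size [:: i1; k] <= 1)%N by [].
apply: leq_trans cnt; apply: uniq_leq_size; first by rewrite /= inE eq_sym kni.
by move=> j; rewrite !inE mem_filter mem_enum andbT => /orP[] /eqP ->.
Qed.

Lemma quadform_le_unitary_diag (M P : 'M[algC]_n) (s : 'rV[algC]_n)
    (mu : algC) (i1 : 'I_n) (w : 'rV[algC]_n) :
  M = P^t* *m diag_mx s *m P -> P^t* *m P = 1%:M ->
  (forall k, k != i1 -> s 0 k <= mu) -> (w *m P^t*) 0 i1 = 0 ->
  (w *m M *m w^t*) 0 0 <= mu * (w *m w^t*) 0 0.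
Proof.
move=> -> PP sle y0; set y := w *m P^t*.
have ey : P *m w^t* = y^t* by rewrite /y trmx_mul map_mxM trmxCK.
have -> : w *m (P^t* *m diag_mx s *m P) *m w^t* = y *m diag_mx s *m y^t*.
  by rewrite -ey !mulmxA.
have -> : w *m w^t* = y *m y^t*.
  by rewrite -ey mulmxA -[w *m P^t* *m P]mulmxA PP mulmx1.
move: y0; rewrite -/y; clearbody y => y0.
rewrite mul_mx_diag !mxE mulr_sumr; apply: ler_sum => k _.
rewrite !mxE mulrAC -normCK.
have [-> | kn] := eqVneq k i1; first by rewrite y0 normr0 expr0n /= mul0r mulr0.
by rewrite [mu * _]mulrC ler_wpM2l ?exprn_ge0 ?normr_ge0 ?sle.
Qed.

(* Variational bound (the easy half of Courant-Fischer for lambda_2): every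
   two-dimensional span of vectors u, v contains a nonzero combination
   w = a u + b v whose Rayleigh quotient is at most lambda_2. *)
Lemma rayleigh_le_second (M : 'M[algC]_n) (u v : 'rV[algC]_n) :
  (0 < n)%N -> M \is hermsymmx ->
  exists a b : algC, ((a != 0) || (b != 0)) /\
    ((a *: u + b *: v) *m M *m (a *: u + b *: v)^t*) 0 0 <=
    second_eigenvalue M * ((a *: u + b *: v) *m (a *: u + b *: v)^t*) 0 0.
Proof.
move=> n_gt0 herm; set P := spectralmx M; set s := spectral_diag M.
have PU : P *m P^t* = 1%:M by apply/eqP; apply: spectral_unitarymx.
have hM : M = P^t* *m diag_mx s *m P.
  rewrite -invmx_unitary ?spectral_unitarymx //.
  by apply/orthomx_spectralP/hermitian_normalmx.
have /mxOverP sR := hermitian_spectral_diag_real herm.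
have [i1 Hi1] := all_but_one_le_second n_gt0 (fun k => sR 0 k)
  (eigenvalues_unitary_diag hM PU).
pose coord (z : 'rV[algC]_n) := (z *m P^t*) 0 i1.
have coord_comb a b : coord (a *: u + b *: v) = a * coord u + b * coord v.
  by rewrite /coord mulmxDl -!scalemxAl !mxE.
have [a [b [ab0 hab]]] : exists a b : algC,
    ((a != 0) || (b != 0)) /\ coord (a *: u + b *: v) = 0.
  have [cv0 | cvN0] := eqVneq (coord v) 0.
    exists 0, 1; split; first by rewrite oner_neq0 orbT.
    by rewrite coord_comb cv0 mul0r mulr0 addr0.
  exists (coord v), (- coord u); split; first by rewrite cvN0.
  by rewrite coord_comb mulNr mulrC subrr.
exists a, b; split=> //.
exact: quadform_le_unitary_diag hM (mulmx1C PU) Hi1 hab.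
Qed.

End SecondEigenvalue.

Lemma adjmx_hermitian n (e : rel 'I_n) : symmetric e -> adjmx e \is hermsymmx.
Proof.
move=> se; rewrite is_hermitianmxE expr0 scale1r; apply/eqP/matrixP=> i j.
by rewrite !mxE conjC_nat se.
Qed.

Lemma sum_nat_pred (T : finType) (P : pred T) : (\sum_i (P i : nat))%N = #|P|.
Proof.
rewrite -sum1_card [RHS]big_mkcond /=.
by apply: eq_bigr => i _; rewrite unfold_in; case: (P i).
Qed.

Section TwoValuedVectors.
Local Open Scope sesquilinear_scope.
Variables (n d : nat) (e : rel 'I_n) (B : {set 'I_n}).

Definition cut : nat := \sum_i \sum_j (e i j && (i \notin B) && (j \in B)).

Definition two_valued (a b : algC) : 'rV[algC]_n :=
  \row_i (if i \in B then a else b).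

Lemma two_valued_comb (a b : algC) :
  a *: two_valued 1 0 + b *: two_valued 0 1 = two_valued a b.
Proof.
by apply/rowP => i; rewrite !mxE; case: (i \in B); rewrite ?(mulr1, mulr0, addr0, add0r).
Qed.

Lemma sqnorm_two_valued (a b : algC) :
  (two_valued a b *m (two_valued a b)^t*) 0 0 =
  #|B|%:R * `|a| ^+ 2 + #|~: B|%:R * `|b| ^+ 2.
Proof.
rewrite !mxE; under eq_bigr => i _ do rewrite !mxE -normCK.
rewrite (eq_bigr (fun i => ((i \in B) : nat)%:R * `|a| ^+ 2 +
                            ((i \in ~: B) : nat)%:R * `|b| ^+ 2)); last first.
  by move=> i _; rewrite inE; case: (i \in B); rewrite /= ?mul1r ?mul0r ?addr0 ?add0r.
by rewrite big_split /= -!mulr_suml -!natr_sum !sum_nat_pred.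
Qed.

Hypothesis e_sym : symmetric e.
Hypothesis e_reg : regular e d.

Lemma cut_sym : cut = (\sum_i \sum_j (e i j && (i \in B) && (j \notin B)))%N.
Proof.
rewrite /cut exchange_big; apply: eq_bigr => i _; apply: eq_bigr => j _.
by rewrite e_sym andbAC andbC andbA.
Qed.

Lemma quadform_two_valued (a b : algC) :
  (two_valued a b *m adjmx e *m (two_valued a b)^t*) 0 0 =
  d%:R * (two_valued a b *m (two_valued a b)^t*) 0 0 - cut%:R * `|a - b| ^+ 2.
Proof.
set f := fun i => if i \in B then a else b.
have deg i : (\sum_j (e i j : nat))%N = d by rewrite sum_nat_pred -(e_reg i) cardsE.
have -> : d%:R * (two_valued a b *m (two_valued a b)^t*) 0 0 =
    \sum_i \sum_j (e i j : nat)%:R * (f i * (f i)^*).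
  rewrite !mxE mulr_sumr; apply: eq_bigr => i _.
  by rewrite -mulr_suml -natr_sum deg !mxE.
have -> : (two_valued a b *m adjmx e *m (two_valued a b)^t*) 0 0 =
    \sum_i \sum_j (e i j : nat)%:R * (f i * (f j)^*).
  rewrite !mxE; under eq_bigr do rewrite !mxE mulr_suml.
  rewrite exchange_big; apply: eq_bigr => i _; apply: eq_bigr => j _.
  by rewrite !mxE mulrCA mulrA.
apply/eqP; rewrite eq_sym subr_eq addrC -subr_eq -sumrB; apply/eqP.
rewrite (eq_bigr (fun i => \sum_j
    (((e i j && (i \notin B) && (j \in B)) : nat)%:R * (b * (b - a)^*) +
     ((e i j && (i \in B) && (j \notin B)) : nat)%:R * (a * (a - b)^*)))); last first.
  move=> i _; rewrite -sumrB; apply: eq_bigr => j _.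
  by rewrite /f; case: (e i j); case: (i \in B); case: (j \in B) => /=; ring.
under eq_bigr do rewrite big_split /= -!mulr_suml -!natr_sum.
rewrite big_split /= -!mulr_suml -!natr_sum -cut_sym -mulrDr normCK.
by congr (_ * _); rewrite -[b - a]opprB rmorphN /= mulrN addrC -mulrBl.
Qed.

End TwoValuedVectors.

Lemma cut_le_sparse_boundary n (e : rel 'I_n) (B : {set 'I_n}) (c : nat) :
  (forall i, i \notin B -> #|nbhd e i :&: B| <= c)%N ->
  (cut e B <= c * #|~: B|)%N.
Proof.
move=> sparse.
have -> : (c * #|~: B| = \sum_i c * (i \notin B))%N.
  rewrite -big_distrr /= sum_nat_pred; congr (_ * _).
  by apply: eq_card => j; rewrite !inE.
apply: leq_sum => i _; case iB: (i \in B) => /=.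
  by rewrite big1 // => j _; rewrite andbF.
rewrite muln1; apply: leq_trans (sparse i (negbT iB)).
rewrite sum_nat_pred; apply: subset_leq_card; apply/subsetP => j.
by rewrite unfold_in /= andbT => /andP[h1 h2]; rewrite !inE h1 h2.
Qed.

Lemma weighted_cauchy_schwarz (p q x y : algC) :
  0 <= p -> 0 <= q -> 0 <= x -> 0 <= y ->
  p * q * (x + y) ^+ 2 <= (p * x ^+ 2 + q * y ^+ 2) * (p + q).
Proof.
move=> p0 q0 x0 y0; rewrite -subr_ge0.
have -> : (p * x ^+ 2 + q * y ^+ 2) * (p + q) - p * q * (x + y) ^+ 2 =
          (p * x - q * y) ^+ 2 by ring.
by apply: real_exprn_even_ge0; rewrite // rpredB // rpredM // ger0_real.
Qed.

Lemma sparse_boundary_set_bound n d (e : rel 'I_n) (B : {set 'I_n}) (c : nat) :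
  symmetric e -> regular e d -> B != set0 -> ~: B != set0 ->
  (forall i, i \notin B -> #|nbhd e i :&: B| <= c)%N ->
  (d%:R - second_eigenvalue (adjmx e)) * #|B|%:R <= c%:R * n%:R.
Proof.
move=> e_sym e_reg B0 Bc0 sparse.
have bB : (0 < #|B|)%N by rewrite card_gt0.
have bBc : (0 < #|~: B|)%N by rewrite card_gt0.
have n_sum : n = (#|B| + #|~: B|)%N by rewrite cardsC card_ord.
have n_gt0 : (0 < n)%N by rewrite n_sum addn_gt0 bB.
have [a [b [ab0]]] := rayleigh_le_second (two_valued B 1 0) (two_valued B 0 1)
  n_gt0 (adjmx_hermitian e_sym).
rewrite two_valued_comb (quadform_two_valued _ e_sym e_reg) sqnorm_two_valued.
set N := (#|B|%:R * _ + _); set lam := second_eigenvalue _; set E := cut e B => QB.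
have N_gt0 : 0 < N.
  by case/orP: ab0 => h; [apply: ltr_pwDl | apply: ltr_pwDr];
    rewrite ?mulr_ge0 ?exprn_ge0 ?mulr_gt0 ?exprn_gt0 ?normr_gt0 ?ltr0n.
have cut_le : (d%:R - lam) * N <= E%:R * `|a - b| ^+ 2.
  by rewrite mulrBl lerBlDr addrC -lerBlDr.
have E_le : E%:R <= c%:R * #|~: B|%:R :> algC.
  by rewrite -natrM ler_nat; apply: cut_le_sparse_boundary.
have ab_le : `|a - b| ^+ 2 <= (`|a| + `|b|) ^+ 2.
  by rewrite lerXn2r ?nnegrE ?addr_ge0 // ler_normB.
have cs := weighted_cauchy_schwarz (ler0n _ #|B|) (ler0n _ #|~: B|)
  (normr_ge0 a) (normr_ge0 b).
rewrite -natrD -n_sum -/N in cs.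
rewrite -(ler_pM2r N_gt0).
apply: (@le_trans _ _ (#|B|%:R * (E%:R * `|a - b| ^+ 2))).
  by rewrite mulrAC [X in X <= _]mulrC ler_wpM2l.
apply: (@le_trans _ _ (c%:R * (#|B|%:R * #|~: B|%:R * (`|a| + `|b|) ^+ 2))).
  rewrite [leRHS](_ : _ = #|B|%:R * (c%:R * #|~: B|%:R * (`|a| + `|b|) ^+ 2));
    last by ring.
  by rewrite ler_wpM2l // ler_pM ?exprn_ge0 ?ler0n.
by rewrite -[leRHS]mulrA ler_wpM2l // [leRHS]mulrC.
Qed.

Local Close Scope ring_scope.

Lemma bp_stage_sub n (e : rel 'I_n) r (A : {set 'I_n}) j :
  bp_stage e r A j \subset bp_stage e r A j.+1.
Proof. by rewrite /bp_stage iterS /bp_step subsetUl. Qed.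

Lemma seeds_sub_stage n (e : rel 'I_n) r (A : {set 'I_n}) j :
  A \subset bp_stage e r A j.
Proof. elim: j => [|j IH] //; exact: subset_trans IH (bp_stage_sub _ _ _ _). Qed.

Lemma bp_stage_card_grows n (e : rel 'I_n) r (A : {set 'I_n}) k :
  (forall j, j < k -> bp_stage e r A j.+1 != bp_stage e r A j) ->
  k <= #|bp_stage e r A k|.
Proof.
elim: k => [|k IH] grow //.
have /proper_card lt_k : bp_stage e r A k \proper bp_stage e r A k.+1.
  by rewrite properEneq eq_sym grow // bp_stage_sub.
by apply: leq_ltn_trans lt_k; apply: IH => j ltjk; apply: grow; apply: ltnW.
Qed.

Lemma bp_stage_stabilizes n (e : rel 'I_n) r (A : {set 'I_n}) :
  exists i, bp_step e r (bp_stage e r A i) = bp_stage e r A i.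
Proof.
have [/existsP[i /eqP fix_i] | /existsPn stuck] :=
  boolP [exists i : 'I_n.+1, bp_stage e r A i.+1 == bp_stage e r A i].
  by exists i.
have := bp_stage_card_grows (k := n.+1) (fun j ltj => stuck (Ordinal ltj)).
by rewrite leqNgt ltnS (leq_trans (max_card _)) // card_ord.
Qed.

Lemma bp_fixpoint_sparse n (e : rel 'I_n) r (B : {set 'I_n}) :
  bp_step e r B = B -> forall u, u \notin B -> #|nbhd e u :&: B| <= r.-1.
Proof.
move=> fixB u; rewrite -{1}fixB /bp_step in_setU inE negb_or => /andP[_].
by rewrite -ltnNge; case: r {fixB}.
Qed.

Local Open Scope ring_scope.

Theorem lemma1 (n d : nat) (e : rel 'I_n) (delta : algC)
  (Hg : simple_graph e) (Hreg : regular e d) (Hd : (0 < d)%N)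
  (Hdelta0 : 0 < delta) (Hdelta1 : delta < 1)
  (Hlam2 : adj_eigen e 2 <= delta * d%:R)
  (A : {set 'I_n})
  (HA : n%:R / ((1 - delta) * d%:R) < (#|A|)%:R) :
  contagious e 2 A.
Proof.
move=> v; have [i fixB] := bp_stage_stabilizes e 2 A.
set B := bp_stage e 2 A i in fixB.
case vB: (v \in B); first by exists i.
exfalso.
have gap_pos : 0 < (1 - delta) * d%:R by rewrite mulr_gt0 ?subr_gt0 ?ltr0n.
rewrite ltr_pdivrMr // in HA.
have AB : #|A|%:R <= #|B|%:R :> algC by rewrite ler_nat subset_leq_card ?seeds_sub_stage.
have B0 : B != set0.
  rewrite -card_gt0 -(ltr0n algC); apply: lt_le_trans AB.
  by rewrite -(pmulr_lgt0 _ gap_pos); apply: le_lt_trans HA.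
have Bc0 : ~: B != set0 by apply/set0Pn; exists v; rewrite inE vB.
have bound := sparse_boundary_set_bound Hg.1 Hreg B0 Bc0 (bp_fixpoint_sparse fixB).
have gap_le : (1 - delta) * d%:R <= d%:R - second_eigenvalue (adjmx e).
  by rewrite mulrBl mul1r lerB.
have := lt_le_trans HA (ler_pM (ler0n _ _) (ltW gap_pos) AB gap_le).
by rewrite mulrC => /lt_le_trans/(_ bound); rewrite mul1r ltxx.
Qed.
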